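(* Let $\rho\in\mathbb P^N$ and let $i,j\in N$ with $i\neq j$. (a) Let $\rho^{-ij}=\rho_{g_N-ij}$. Then for every network $g\in\mathbb G^N$: $\rho^{-ij}(g)=\rho(g)+\rho(g+ij)$ if $ij\notin g$, and $\rho^{-ij}(g)=0$ if $ij\in g$. Furthermore $g(\rho^{-ij})=g(\rho)-ij$ and $\mathbb G(\rho^{-ij})=\{g\in\mathbb G^N: ij\notin g \text{ and } \mathbb G(\rho)\cap\{g,g+ij\}\neq\varnothing\}$. (b) Let $\rho^{-i}=\rho_{g_{N-i}}$ where $g_{N-i}=g_N\setminus L_i(g_N)$. Then for every network $g\subseteq g_{N-i}$, $\rho^{-i}(g)=\rho(g)+\sum_{\varnothing\neq h\subseteq L_i(g(\rho))}\rho(g\cup h)$, and for every $g\not\subseteq g_{N-i}$, $\rho^{-i}(g)=0$. Furthermore $g(\rho^{-i})=g(\rho)\setminus L_i(g_N)$ and $\mathbb G(\rho^{-i})=\{g\in\mathbb G^N: g\cap L_i(g_N)=\varnothing \text{ and } \mathbb G(\rho)\cap\{g\cup h: h\subseteq L_i(g_N)\}\neq\varnothing\}$.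
   Context: $N=\{1,\dots,n\}$ is a finite player set. A link is an unordered pair $ij=\{i,j\}$ of distinct players; $g_N$ is the set of all links; a network is any $g\subseteq g_N$; $\mathbb G^N$ is the set of all networks. For a network $g$, $L_i(g)=\{ij\in g\}$ is the set of links of player $i$ in $g$; $g+ij=g\cup\{ij\}$ and $g-ij=g\setminus\{ij\}$. A network formation probability distribution is a map $\rho\colon\mathbb G^N\to[0,1]$ with $\sum_{g\in\mathbb G^N}\rho(g)=1$; $\mathbb P^N$ is the set of these. $\mathbb G(\rho)=\{g:\rho(g)>0\}$ is the set of formable networks and the extent is $g(\rho)=\bigcup_{g\in\mathbb G(\rho)}g$. For a network $g$, the restriction of $\rho$ to $g$ is $\rho_g\in\mathbb P^N$ with $\rho_g(h)=\sum_{h'\subseteq g_N\setminus g}\rho(h\cup h')$ if $h\subseteq g$ and $\rho_g(h)=0$ otherwise. *)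

From HB Require Import structures.
From mathcomp Require Import all_boot all_order all_algebra.
Set Implicit Arguments. Unset Strict Implicit. Unset Printing Implicit Defensive.
Import Order.TTheory GRing.Theory Num.Theory.
Local Open Scope ring_scope.

(* Players N = {1,...,n} are represented by 'I_n. *)
Definition link (n : nat) := {A : {set 'I_n} | #|A| == 2%N}.

Lemma link2P (n : nat) (i j : 'I_n) : i != j -> #|[set i; j]| == 2%N.
Proof. by move=> hij; rewrite cards2 hij. Qed.

Definition mklink (n : nat) (i j : 'I_n) (hij : i != j) : link n :=
  exist _ [set i; j] (link2P hij).

Definition network (n : nat) := {set link n}.

Definition gN (n : nat) : network n := [set: link n].

Definition Lnk (n : nat) (i : 'I_n) (g : network n) : network n :=
  [set l in g | i \in val l].

Definition is_nfpd (R : realFieldType) (n : nat) (rho : network n -> R) : Prop :=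
  (forall g, 0 <= rho g <= 1) /\ \sum_(g : network n) rho g = 1.

Definition formable (R : realFieldType) (n : nat) (rho : network n -> R)
  : {set network n} := [set g | 0 < rho g].

Definition extent (R : realFieldType) (n : nat) (rho : network n -> R)
  : network n := \bigcup_(g in formable rho) g.

Definition restr (R : realFieldType) (n : nat) (rho : network n -> R)
  (g : network n) : network n -> R :=
  fun h => if h \subset g
           then \sum_(h' : network n | h' \subset gN n :\: g) rho (h :|: h')
           else 0.

From HB Require Import structures.
From mathcomp Require Import all_boot all_order all_algebra.
Import Order.TTheory GRing.Theory Num.Theory.
Local Open Scope ring_scope.

(* Both parts restrict rho to a network of the form g_N minus a set A of links
   (A = {ij}, resp. A = L_i(g_N)).  For such a restriction, rho_{g_N - A}(g) is
   the sum of rho(g ∪ h) over h ⊆ A when g avoids A, and 0 otherwise.  Since rho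
   is nonnegative, this sum is positive iff some g ∪ h is formable, which gives
   the formable networks; splitting a formable f as (f \ A) ∪ (f ∩ A) gives the
   extent.  Finally, only the h inside the extent of rho contribute to the sum. *)

Lemma LnkE (n : nat) (i : 'I_n) (g : network n) : Lnk i g = Lnk i (gN n) :&: g.
Proof. by apply/setP=> l; rewrite /gN !inE andbC. Qed.

Lemma subset_gND (n : nat) (g A : network n) :
  (g \subset gN n :\: A) = [disjoint g & A].
Proof. by rewrite subsetD subsetT. Qed.

Section RestrictionToComplement.

Variables (R : realFieldType) (n : nat) (rho : network n -> R).

Lemma restr_complE (A g : network n) : [disjoint g & A] ->
  restr rho (gN n :\: A) g = \sum_(h in powerset A) rho (g :|: h).
Proof.
rewrite /restr subset_gND => -> /=; rewrite /gN !setTD setCK.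
by apply: eq_bigl => h; rewrite powersetE.
Qed.

Lemma restr_compl0 (A g : network n) : ~~ [disjoint g & A] ->
  restr rho (gN n :\: A) g = 0.
Proof. by rewrite /restr subset_gND => /negbTE ->. Qed.

Lemma formable_sub_extent (f : network n) :
  f \in formable rho -> f \subset extent rho.
Proof. exact: bigcup_sup. Qed.

Hypothesis rho_ge0 : forall g, 0 <= rho g.

Lemma eq0_outside_extent (f : network n) : ~~ (f \subset extent rho) -> rho f = 0.
Proof.
apply: contraNeq; rewrite neq_lt ltNge rho_ge0 /= => f_pos.
by apply: formable_sub_extent; rewrite inE.
Qed.

Lemma sum_powerset_extent (A g : network n) :
  \sum_(h in powerset A) rho (g :|: h) =
  \sum_(h in powerset (A :&: extent rho)) rho (g :|: h).
Proof.
rewrite (big_setID (powerset (A :&: extent rho))) /=.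
rewrite [X in _ + X]big1 ?addr0 => [|h]; last first.
  rewrite !inE subsetI => /andP[h_out hA]; apply: eq0_outside_extent.
  apply: contraNN h_out => gh_ext.
  by rewrite hA (subset_trans _ gh_ext) ?subsetUr.
by rewrite (setIidPr _) // powersetS ?subsetIl.
Qed.

Lemma formable_restr_compl (A : network n) :
  formable (restr rho (gN n :\: A)) =
  [set g : network n | [disjoint g & A] &&
           (formable rho :&: [set g :|: h | h in powerset A] != set0)].
Proof.
apply/setP=> g; rewrite !inE.
have [disj|] /= := boolP [disjoint g & A]; last by move/restr_compl0->; rewrite ltxx.
rewrite restr_complE // lt_def sumr_ge0 ?andbT // psumr_neq0 //.
apply/hasP/set0Pn => [[h _ /andP[hA h_pos]]|[_ /setIP[/[swap] /imsetP[h hA ->] h_pos]]].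
  by exists (g :|: h); rewrite !inE h_pos; apply/imsetP; exists h.
by rewrite inE in h_pos; exists h; rewrite ?mem_index_enum ?hA.
Qed.

Lemma extent_restr_compl (A : network n) :
  extent (restr rho (gN n :\: A)) = extent rho :\: A.
Proof.
apply/setP=> l; rewrite inE; apply/bigcupP/andP.
  move=> [g]; rewrite formable_restr_compl inE.
  case/andP=> disj /set0Pn[_ /setIP[/[swap] /imsetP[h _ ->] gh_pos]] lg.
  split; first by rewrite (disjointFr disj lg).
  by apply: (subsetP (formable_sub_extent _ gh_pos)); rewrite inE lg.
move=> [lA /bigcupP[f f_pos lf]]; exists (f :\: A); last by rewrite inE lA lf.
rewrite formable_restr_compl inE; apply/andP; split.
  by rewrite -setI_eq0 setIDAC setDIl setDv setI0.
apply/set0Pn; exists f; rewrite inE f_pos; apply/imsetP; exists (f :&: A).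
  by rewrite powersetE subsetIr.
by rewrite setUC setID.
Qed.

End RestrictionToComplement.

Theorem proposition1 (R : realFieldType) (n : nat) (rho : network n -> R)
  (i j : 'I_n) (hij : i != j) :
  is_nfpd rho ->
  (* (a) *)
  (let ij := mklink hij in
   let rho_ij := restr rho (gN n :\ ij) in
   (forall g : network n, ij \notin g -> rho_ij g = rho g + rho (ij |: g)) /\
   (forall g : network n, ij \in g -> rho_ij g = 0) /\
   extent rho_ij = extent rho :\ ij /\
   formable rho_ij =
     [set g : network n | (ij \notin g) &&
                          (formable rho :&: [set g; ij |: g] != set0)]) /\
  (* (b) *)
  (let gNi := gN n :\: Lnk i (gN n) in
   let rho_i := restr rho gNi in
   (forall g : network n, g \subset gNi ->
      rho_i g = rho g + \sum_(h in powerset (Lnk i (extent rho)) | h != set0)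
                          rho (g :|: h)) /\
   (forall g : network n, ~~ (g \subset gNi) -> rho_i g = 0) /\
   extent rho_i = extent rho :\: Lnk i (gN n) /\
   formable rho_i =
     [set g : network n | (g :&: Lnk i (gN n) == set0) &&
        (formable rho :&: [set g :|: h | h in powerset (Lnk i (gN n))] != set0)]).
Proof.
move=> [rho01 _]; have rho_ge0 g : 0 <= rho g by case/andP: (rho01 g).
split=> [ij rho_ij|gNi rho_i]; [rewrite {}/rho_ij | rewrite {}/rho_i {}/gNi].
  have disj_ij (g : network n) : [disjoint g & [set ij]] = (ij \notin g).
    by rewrite disjoint_sym disjoints1.
  have ij_neq0 : set0 != [set ij] by apply/eqP=> /setP/(_ ij); rewrite !inE eqxx.
  split=> [g ijg|]; first rewrite restr_complE ?disj_ij // powerset1.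
    by rewrite big_setU1 ?big_set1 ?inE //= setU0 setUC.
  split=> [g ijg|]; first by rewrite restr_compl0 ?disj_ij ?ijg.
  split; first exact: extent_restr_compl.
  apply/setP=> g; rewrite formable_restr_compl // !inE disj_ij powerset1.
  by rewrite imsetU !imset_set1 setU0 (setUC g).
split=> [g|]; first rewrite subset_gND => disj.
  rewrite restr_complE // sum_powerset_extent // -LnkE.
  by rewrite (bigD1 set0) ?powersetE ?sub0set //= setU0.
split=> [g|]; first by rewrite subset_gND => /restr_compl0->.
split; first exact: extent_restr_compl.
by apply/setP=> g; rewrite formable_restr_compl // !inE (setI_eq0 g).
Qed.
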